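(* Let $n\ge 1$ and $d\ge 1$ be integers, let $\mathcal{X}\subset\mathbb{R}^d$ be compact and convex, let $\mathbf{x}_0\in\mathcal{X}$, let $w_0,w_1,\dots,w_n\in\mathbb{R}$, and let $\mathbf{t}_1,\dots,\mathbf{t}_n\in\mathbb{R}^d$. Consider the $n$-player game in which player $i\in[n]=\{1,\dots,n\}$ chooses $\mathbf{x}_i\in\mathcal{X}$ and incurs the loss $$\ell_i(\mathbf{x}_1,\dots,\mathbf{x}_n)=\Big\|w_0\mathbf{x}_0+\sum_{j=1}^n w_j\mathbf{x}_j-\mathbf{t}_i\Big\|_2^2 .$$ Then this game is an (exact) potential game with potential function $$\phi(\mathbf{x}_1,\dots,\mathbf{x}_n)=\Big\|\sum_{i=0}^n w_i\mathbf{x}_i\Big\|_2^2-2\sum_{i=1}^n w_i\mathbf{t}_i^\top\mathbf{x}_i,$$ that is, for every $i\in[n]$, every $(\mathbf{x}_1,\dots,\mathbf{x}_n)\in\mathcal{X}^n$ and every $\mathbf{y}\in\mathcal{X}$, $$\ell_i(\mathbf{x}_i,\mathbf{x}_{-i})-\ell_i(\mathbf{y},\mathbf{x}_{-i})=\phi(\mathbf{x}_i,\mathbf{x}_{-i})-\phi(\mathbf{y},\mathbf{x}_{-i}).$$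
   Context: For a profile $\mathbf{x}=(\mathbf{x}_1,\dots,\mathbf{x}_n)$, $(\mathbf{y},\mathbf{x}_{-i})$ denotes the profile obtained by replacing player $i$'s action $\mathbf{x}_i$ with $\mathbf{y}$ and keeping all other actions fixed. *)

From HB Require Import structures.
From mathcomp Require Import all_boot all_order all_algebra.
From mathcomp Require Import all_classical all_reals all_analysis.
Set Implicit Arguments. Unset Strict Implicit. Unset Printing Implicit Defensive.
Import Order.TTheory GRing.Theory Num.Theory.
Import numFieldNormedType.Exports.
Local Open Scope ring_scope.
Local Open Scope classical_set_scope.

Definition sqnorm (R : realType) (d : nat) (v : 'rV[R]_d) : R :=
  \sum_(k < d) (v 0 k) ^+ 2.

Definition dotv (R : realType) (d : nat) (u v : 'rV[R]_d) : R :=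
  \sum_(k < d) u 0 k * v 0 k.

Definition convex_setv (R : realType) (d : nat) (X : set 'rV[R]_d) : Prop :=
  forall x y, X x -> X y -> forall t : R, 0 <= t -> t <= 1 ->
    X (t *: x + (1 - t) *: y).

Definition upd (R : realType) (n d : nat) (x : 'I_n -> 'rV[R]_d) (i : 'I_n)
  (y : 'rV[R]_d) : 'I_n -> 'rV[R]_d :=
  fun j => if j == i then y else x j.

Definition loss (R : realType) (n d : nat) (w0 : R) (x0 : 'rV[R]_d)
  (w : 'I_n -> R) (t : 'I_n -> 'rV[R]_d) (i : 'I_n) (x : 'I_n -> 'rV[R]_d) : R :=
  sqnorm (w0 *: x0 + \sum_(j < n) w j *: x j - t i).

Definition potential (R : realType) (n d : nat) (w0 : R) (x0 : 'rV[R]_d)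
  (w : 'I_n -> R) (t : 'I_n -> 'rV[R]_d) (x : 'I_n -> 'rV[R]_d) : R :=
  sqnorm (w0 *: x0 + \sum_(i < n) w i *: x i)
  - 2 * \sum_(i < n) w i * dotv (t i) (x i).

From HB Require Import structures.
From mathcomp Require Import all_boot all_order all_algebra.
From mathcomp Require Import all_classical all_reals all_analysis.
From mathcomp Require Import ring.
Import Order.TTheory GRing.Theory Num.Theory.
Import numFieldNormedType.Exports.
Local Open Scope ring_scope.
Local Open Scope classical_set_scope.

(* A unilateral deviation of player i moves the aggregate
   [s = w0 x0 + \sum_j w_j x_j] to [s' = s + w_i (y - x_i)]. Expanding the
   square, the loss [||s - t_i||^2] then changes by [||s||^2 - ||s'||^2] plus the
   cross term [2 t_i^T (s' - s) = 2 w_i t_i^T (y - x_i)], which is exactly the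
   change of the linear part of the potential. *)

Section Vectors.
Variables (R : realType) (d : nat).
Implicit Types (u v t : 'rV[R]_d) (c : R).

Lemma dotvBr t u v : dotv t (u - v) = dotv t u - dotv t v.
Proof.
by rewrite /dotv -sumrB; apply: eq_bigr => k _; rewrite !mxE mulrBr.
Qed.

Lemma dotvZr t c u : dotv t (c *: u) = c * dotv t u.
Proof.
rewrite /dotv mulr_sumr; apply: eq_bigr => k _.
by rewrite !mxE mulrCA.
Qed.

Lemma sqnorm_shiftB u v t :
  sqnorm (u - t) - sqnorm (u + v - t) = sqnorm u - sqnorm (u + v) + 2 * dotv t v.
Proof.
rewrite /sqnorm /dotv -!sumrB mulr_sumr -big_split /=.
by apply: eq_bigr => k _; rewrite !mxE; ring.
Qed.

End Vectors.

Lemma big_upd {R : realType} {V : zmodType} {n d : nat}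
    (F : 'I_n -> 'rV[R]_d -> V) (x : 'I_n -> 'rV[R]_d) (i : 'I_n) (y : 'rV[R]_d) :
  \sum_(j < n) F j (upd x i y j) = \sum_(j < n) F j (x j) + (F i y - F i (x i)).
Proof.
rewrite (bigD1 i) //= [X in _ = X + _](bigD1 i) //= /upd eqxx.
under eq_bigr => j /negbTE -> do [].
by rewrite addrAC [F i (x i) + _]addrC subrK.
Qed.

Theorem theorem1 (R : realType) (n d : nat) (hn : (1 <= n)%N) (hd : (1 <= d)%N)
  (X : set 'rV[R]_d) (hXc : compact X) (hXv : convex_setv X)
  (x0 : 'rV[R]_d) (hx0 : X x0) (w0 : R) (w : 'I_n -> R) (t : 'I_n -> 'rV[R]_d) :
  forall (i : 'I_n) (x : 'I_n -> 'rV[R]_d) (y : 'rV[R]_d),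
    (forall j, X (x j)) -> X y ->
    loss w0 x0 w t i x - loss w0 x0 w t i (upd x i y)
    = potential w0 x0 w t x - potential w0 x0 w t (upd x i y).
Proof.
move=> i x y _ _; rewrite /loss /potential.
rewrite (big_upd (fun j v => w j *: v)) (big_upd (fun j v => w j * dotv (t j) v)) /=.
rewrite -scalerBr addrA sqnorm_shiftB dotvZr dotvBr.
set S := w0 *: x0 + _.
move: (w i) (dotv (t i) y) (dotv (t i) (x i)) (\sum_(j < n) _ * _) (sqnorm S) (sqnorm (S + _)).
by move=> c p q s a b; ring.
Qed.
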